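(* Let $G$ be an abelian group that is torsion-free or cyclic of prime order. Let $M$ be a matroid over $G$ and $N$ a sparse paving matroid over $G$, both of the same rank $n$, such that $|E(M)|<|E(N)|-1$. If $0\notin E(N)$, then $M$ is matched to $N$.
   Context: A matroid over $G$ is a matroid $M$ whose finite ground set $E(M)$ is a subset of $G$; all matroids are assumed loopless. A matroid of rank $n$ is paving if every $(n-1)$-element subset of its ground set is independent; it is sparse paving if both it and its dual matroid are paving. For matroids $M,N$ over $G$ with $r(M)=r(N)=n>0$ and bases $\mathcal{M}=\{a_1,\dots,a_n\}$ of $M$ and $\mathcal{N}=\{b_1,\dots,b_n\}$ of $N$, $\mathcal{M}$ is matched to $\mathcal{N}$ if there is a permutation $\pi\in S_n$ with $a_i+b_{\pi(i)}\notin E(M)$ for all $i$. $M$ is matched to $N$ if for every basis $\mathcal{M}$ of $M$ there exists a basis $\mathcal{N}$ of $N$ such that $\mathcal{M}$ is matched to $\mathcal{N}$. *)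

From HB Require Import structures.
From mathcomp Require Import all_boot all_order all_algebra.
From mathcomp Require Import finmap.
Set Implicit Arguments. Unset Strict Implicit. Unset Printing Implicit Defensive.
Import GRing.Theory.
Local Open Scope fset_scope.
Local Open Scope ring_scope.

Definition torsion_free (G : zmodType) : Prop :=
  forall (x : G) (k : nat), (0 < k)%N -> x *+ k = 0 -> x = 0.

Definition cyclic_prime_order (G : zmodType) : Prop :=
  exists (p : nat) (g : G), prime p /\ g != 0 /\ g *+ p = 0 /\
    forall x : G, exists k : nat, x = g *+ k.

Record matroid (G : choiceType) := Matroid {
  ground : {fset G};
  indep : {fset G} -> Prop;
  indep_sub : forall I, indep I -> I `<=` ground;
  indep0 : indep fset0;
  indep_hered : forall I J, J `<=` I -> indep I -> indep J;
  indep_aug : forall I J, indep I -> indep J -> (#|` I| < #|` J|)%N ->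
    exists x, x \in J `\` I /\ indep (x |` I)
}.

Section MatroidDefs.
Variable G : choiceType.
Implicit Types (M : matroid G) (I B : {fset G}).

Definition loopless M : Prop := forall x, x \in ground M -> indep M [fset x].

Definition basis M B : Prop :=
  indep M B /\ forall x, x \in ground M -> x \notin B -> ~ indep M (x |` B).

Definition has_rank M (n : nat) : Prop := exists B, basis M B /\ #|` B| = n.

(* independent sets of the dual matroid M^* (bases of M^* = complements of bases of M) *)
Definition dual_indep M I : Prop :=
  I `<=` ground M /\ exists B, basis M B /\ [disjoint I & B].

Definition paving M : Prop :=
  forall n, has_rank M n ->
    forall I, I `<=` ground M -> #|` I| = n.-1 -> indep M I.

(* the dual is paving: r(M^* ) = |E| - r(M) *)
Definition dual_paving M : Prop :=
  forall n, has_rank M n ->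
    forall I, I `<=` ground M -> #|` I| = (#|` ground M| - n).-1 -> dual_indep M I.

Definition sparse_paving M : Prop := paving M /\ dual_paving M.

End MatroidDefs.

Section Matched.
Variable G : zmodType.
Implicit Types (M N : matroid G) (A B : {fset G}).

(* basis A of M is matched to basis B of N: a bijection pi : A -> B
   (injective map from A into B, |A| = |B|) with a + pi a \notin E(M). *)
Definition bases_matched M A B : Prop :=
  exists f : G -> G,
    {in A &, injective f} /\ {in A, forall a, f a \in B} /\
    {in A, forall a, a + f a \notin ground M}.

Definition matched M N : Prop :=
  forall A, basis M A -> exists B, basis N B /\ bases_matched M A B.

End Matched.

From mathcomp Require Import all_boot all_algebra.
From mathcomp Require Import finmap zify.
From Stdlib Require Import Classical.
Set Implicit Arguments. Unset Strict Implicit. Unset Printing Implicit Defensive.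
Import GRing.Theory.
Local Open Scope fset_scope.

(* Given a basis A of M, call b in E(N) a partner of a in A when a + b is not
   in E(M).  For nonempty X <= A, let R be the set of elements of E(N) that are
   partners of no element of X; then X + R <= E(M).  Every nonzero element of G
   has order larger than |E(M)|, so the Cauchy-Davenport inequality
   |X + R| >= |X| + |R| - 1 holds, and it shows that X has more than |X|
   partners.  Hall's theorem with this surplus gives two systems of distinct
   partners f and h such that h avoids some c = f(a) while its image D still
   contains C \ {c}, where C is the image of f.  The n-sets C and D share n - 1
   elements, so, N being sparse paving, one of them is independent; it is then
   a basis of N matched to A. *)

Section Hall.
(* [u0] is needed only to give the empty family a representative function. *)
Variables (T U : choiceType) (u0 : U).
Implicit Types (S : T -> {fset U}) (A X Y : {fset T}) (V : {fset U}).

Definition nbhd S X : {fset U} := \bigcup_(x <- X) S x.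

Lemma nbhdP S X y : reflect (exists2 x, x \in X & y \in S x) (y \in nbhd S X).
Proof.
apply: (iffP (bigfcupP _ _ _ _)) => [[x /andP[? _] ?]|[x ? ?]]; exists x => //.
by rewrite andbT.
Qed.

Lemma nbhdD S X V : nbhd (fun x => S x `\` V) X = nbhd S X `\` V.
Proof.
apply/fsetP=> y; apply/nbhdP/fsetDP => [[x xX /fsetDP[yS yV]]|[/nbhdP[x xX yS] yV]].
  by split=> //; apply/nbhdP; exists x.
by exists x => //; apply/fsetDP.
Qed.

Lemma nbhdU S X Y : nbhd S (X `|` Y) = nbhd S X `|` nbhd S Y.
Proof.
apply/fsetP=> y; apply/nbhdP/fsetUP => [[x /fsetUP[xX|xY] yS]|[]/nbhdP[x xZ yS]].
- by left; apply/nbhdP; exists x.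
- by right; apply/nbhdP; exists x.
- by exists x => //; apply/fsetUP; left.
- by exists x => //; apply/fsetUP; right.
Qed.

Lemma nbhd1 S x : nbhd S [fset x] = S x.
Proof. exact: big_seq_fset1. Qed.

Definition hall_condition S A := forall X, X `<=` A -> #|` X| <= #|` nbhd S X|.

Definition surplus S A :=
  forall X, X `<=` A -> X != fset0 -> #|` X| < #|` nbhd S X|.

Definition sdr S A (f : T -> U) := {in A &, injective f} /\ {in A, forall x, f x \in S x}.

Lemma hall_condition_sub S A X : X `<=` A -> hall_condition S A -> hall_condition S X.
Proof. by move=> sXA hA Y sYX; apply/hA/(fsubset_trans sYX). Qed.

Lemma hall_condition_of_surplus S A : surplus S A -> hall_condition S A.
Proof.
move=> sA X sXA; have [->|[x xX]] := fset_0Vmem X; first by rewrite cardfs0.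
by apply/ltnW/sA => //; apply/fset0Pn; exists x.
Qed.

Lemma surplus_hall_conditionD1 S A b :
  surplus S A -> hall_condition (fun x => S x `\ b) A.
Proof.
move=> sA X sXA; have [->|[x xX]] := fset_0Vmem X; first by rewrite cardfs0.
have := sA X sXA (introT (fset0Pn X) (ex_intro _ x xX)).
rewrite nbhdD cardfsD.
by have := fsubset_leq_card (fsubsetIr (nbhd S X) [fset b]); rewrite cardfs1; lia.
Qed.

Lemma hall_condition_contract S A X :
  X `<=` A -> #|` nbhd S X| <= #|` X| -> hall_condition S A ->
  hall_condition (fun x => S x `\` nbhd S X) (A `\` X).
Proof.
move=> sXA critX hA Y sYAX.
have dYX : Y `&` X = fset0.
  apply/eqP; rewrite -fsubset0; apply/fsubsetP=> x /fsetIP[xY xX].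
  by have /fsetDP[/negP] := fsubsetP sYAX x xY; rewrite xX.
have := hA (Y `|` X); rewrite fsubUset sXA (fsubset_trans sYAX (fsubsetDl _ _)).
rewrite nbhdU nbhdD cardfsD => /(_ isT).
have := cardfsUI Y X; have := cardfsUI (nbhd S Y) (nbhd S X).
by rewrite dYX cardfs0; lia.
Qed.

Lemma sdr_sub S S' A f :
  {in A, forall x, S x `<=` S' x} -> sdr S A f -> sdr S' A f.
Proof. by move=> sS [fi fS]; split=> // x xA; apply: fsubsetP (sS x xA) _ (fS x xA). Qed.

Lemma card_sdr_image S A f : sdr S A f -> #|` f @` A| = #|` A|.
Proof. by case=> fi _; rewrite card_in_imfset. Qed.

Lemma sdr_image_sub_nbhd S A f : sdr S A f -> f @` A `<=` nbhd S A.
Proof.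
by case=> _ fS; apply/fsubsetP=> _ /imfsetP[x /= xA ->]; apply/nbhdP; exists x; rewrite ?fS.
Qed.

Lemma sdr_glue S A X f g :
  sdr S X f -> sdr (fun x => S x `\` f @` X) (A `\` X) g ->
  sdr S A (fun x => if x \in X then f x else g x).
Proof.
move=> [fi fS] [gi gS].
have fX x : x \in X -> f x \in f @` X by move=> xX; apply/imfsetP; exists x.
have gS' z : z \in A -> z \notin X -> g z \in S z /\ g z \notin f @` X.
  by move=> zA zX; have /fsetDP[] : g z \in S z `\` f @` X by apply/gS/fsetDP.
split=> [x y xA yA|x xA] /=; last first.
  by case: ifP => xX; [apply: fS | case: (gS' x xA (negbT xX))].
case: ifP => xX; case: ifP => yX.
- exact: fi.
- by move=> e; case: (gS' y yA (negbT yX)); rewrite -e fX.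
- by move=> e; case: (gS' x xA (negbT xX)); rewrite e fX.
- by apply: gi; apply/fsetDP; rewrite ?xX ?yX.
Qed.

Lemma hall_marriage S A : hall_condition S A -> exists f, sdr S A f.
Proof.
have [k] := ubnP #|` A|; elim: k S A => // k IH S A ltA hA.
have [->|[a aA]] := fset_0Vmem A; first by exists (fun=> u0); split=> x; rewrite inE.
have [[X [sXA nX0 nXA critX]]|nocrit] := classic (exists X,
    [/\ X `<=` A, X != fset0, X != A & #|` nbhd S X| <= #|` X|]).
  have ltXA : #|` X| < #|` A| by apply/fproper_ltn_card; rewrite fproperEneq nXA.
  have [f fS] := IH S X (leq_trans ltXA ltA) (hall_condition_sub sXA hA).
  have [|g gS] := IH _ (A `\` X) _ (hall_condition_contract sXA critX hA).
    by rewrite cardfsDS //; move: nX0; rewrite -cardfs_gt0; lia.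
  exists (fun x => if x \in X then f x else g x); apply: (sdr_glue fS (sdr_sub _ gS)).
  by move=> x _; apply/fsetDS/sdr_image_sub_nbhd.
have [b bSa] : exists b, b \in S a.
  have := hA [fset a]; rewrite fsub1set aA nbhd1 cardfs1 => /(_ isT).
  by rewrite cardfs_gt0 => /fset0Pn.
have surpAa : surplus S (A `\ a).
  move=> X sXAa nX0; rewrite ltnNge; apply/negP => critX; apply: nocrit; exists X.
  move: sXAa; rewrite fsubsetD1 => /andP[sXA aX]; split=> //.
  by apply/eqP => eXA; rewrite eXA aA in aX.
have [|g gS] := IH _ (A `\ a) _ (surplus_hall_conditionD1 b surpAa).
  by have := cardfsD1 a A; rewrite aA; lia.
exists (fun x => if x \in [fset a] then b else g x); apply: sdr_glue.
  by split=> [x y /fset1P-> /fset1P->|x /fset1P->].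
by rewrite imfset_fset1.
Qed.

Lemma sdr_update S A f a y :
  sdr S A f -> y \in S a -> y \notin f @` A ->
  sdr S A (fun x => if x == a then y else f x).
Proof.
move=> [fi fS] ySa yfA.
have fA x : x \in A -> f x \in f @` A by move=> xA; apply/imfsetP; exists x.
split=> [x z xA zA|x xA] /=; last by case: eqP => [->|_]; [|apply: fS].
case: eqP => [->|xa]; case: eqP => [->|za] // e.
- by move: yfA; rewrite e fA.
- by move: yfA; rewrite -e fA.
- exact: fi.
Qed.

Lemma sdrD1_image_notin S A f c : sdr (fun x => S x `\ c) A f -> c \notin f @` A.
Proof.
by case=> _ fS; apply/imfsetP=> -[x /= xA cE]; have := fS x xA; rewrite -cE fsetD11.
Qed.

Lemma sdrD1_cover S A f g c :
  sdr S A f -> sdr (fun x => S x `\ c) A g ->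
  exists h, sdr (fun x => S x `\ c) A h /\ f @` A `\ c `<=` h @` A.
Proof.
move=> fS; have [k] := ubnP #|` [fset x in A | g x != f x]|.
elim: k g => // k IH g ltg gS.
have [cover|/fsubsetPn[x /fsetD1P[xc /imfsetP[a /= aA xE]] xg]] :=
  boolP (f @` A `\ c `<=` g @` A); first by exists g.
rewrite {x}xE in xc xg.
have gfa : g a != f a by apply: contraNneq xg => <-; apply/imfsetP; exists a.
apply: (IH (fun x => if x == a then f a else g x)); last first.
  by apply: sdr_update => //; apply/fsetD1P; split=> //; case: fS => _; apply.
have aD : a \in [fset x in A | g x != f x] by rewrite !inE aA gfa.
have sub : [fset x in A | (if x == a then f a else g x) != f x]
           `<=` [fset x in A | g x != f x] `\ a.
  apply/fsubsetP=> x; rewrite !inE.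
  by have [->|] := eqVneq x a; rewrite ?eqxx ?andbF.
have := fsubset_leq_card sub; have := cardfsD1 a [fset x in A | g x != f x].
by rewrite aD; lia.
Qed.
End Hall.

Section Matroid.
Variables (T : choiceType) (M : matroid T) (n : nat).
Hypothesis rankM : has_rank M n.
Implicit Types (B C D I : {fset T}).

Lemma basis_sub B : basis M B -> B `<=` ground M.
Proof. by case=> iB _; apply: indep_sub. Qed.

Lemma card_basis B : basis M B -> #|` B| = n.
Proof.
have [B0 [[iB0 mB0] <-]] := rankM; case=> iB mB.
have [ltB|ltB0|//] := ltngtP #|` B| #|` B0|.
- have [x [/fsetDP[xB0 xB] ix]] := indep_aug iB iB0 ltB.
  by case: (mB x) => //; apply: fsubsetP (indep_sub iB0) _ xB0.
- have [x [/fsetDP[xB xB0] ix]] := indep_aug iB0 iB ltB0.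
  by case: (mB0 x) => //; apply: fsubsetP (indep_sub iB) _ xB.
Qed.

Lemma indep_card_basis I : indep M I -> #|` I| = n -> basis M I.
Proof.
move=> iI cI; split=> // x xM xI ixI.
have [B0 [[iB0 mB0] cB0]] := rankM.
have ltB0 : (#|` B0| < #|` x |` I|)%N by rewrite cardfsU1 xI cB0 cI.
have [y [/fsetDP[yxI yB0] iy]] := indep_aug iB0 ixI ltB0.
by case: (mB0 y) => //; apply: fsubsetP (indep_sub ixI) _ yxI.
Qed.

Hypotheses (n_gt0 : (0 < n)%N) (spM : sparse_paving M).

Lemma sparse_paving_exchange I y z :
  I `<=` ground M -> #|` I| = n.-1 -> y \in ground M -> z \in ground M ->
  y != z -> y \notin I -> z \notin I -> indep M (y |` I) \/ indep M (z |` I).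
Proof.
move=> sI cI yM zM yz yI zI; have [pav dpav] := spM.
pose Y := y |` (z |` I).
have cY : #|` Y| = n.+1 by rewrite !cardfsU1 !inE negb_or yz yI zI cI; lia.
have sY : Y `<=` ground M by rewrite !fsubUset !fsub1set yM zM sI.
have [_ [B [bB dB]]] : dual_indep M (ground M `\` Y).
  by apply: dpav rankM _ (fsubsetDl _ _) _; rewrite cardfsDS // cY subnS.
have ltI : (#|` I| < #|` B|)%N by rewrite cI (card_basis bB); lia.
have [w [/fsetDP[wB wI] iw]] := indep_aug (pav n rankM I sI cI) bB.1 ltI.
have wM := fsubsetP (basis_sub bB) w wB.
have : w \in Y.
  by apply: contraTT wB => wY; apply: (fdisjointP dB); rewrite inE wY wM.
by rewrite !inE (negbTE wI) orbF => /orP[]/eqP wE; [left|right]; rewrite -wE.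
Qed.

Lemma sparse_paving_swap C D c :
  C `<=` ground M -> D `<=` ground M -> #|` C| = n -> #|` D| = n ->
  c \in C -> c \notin D -> C `\ c `<=` D -> indep M C \/ indep M D.
Proof.
move=> sC sD cC cD cC' cD' sCD.
have cI : #|` C `\ c| = n.-1 by have := cardfsD1 c C; rewrite cC' cC; lia.
have /fsubsetPn[d dD dI] : ~~ (D `<=` C `\ c).
  by apply/negP => /fsubset_leq_card; rewrite cD cI; lia.
have eD : d |` (C `\ c) = D.
  apply/eqP; rewrite eqEfcard fsubUset fsub1set dD sCD cardfsU1 dI cI cD /=; lia.
have dc : c != d by apply: contraNneq cD' => ->.
rewrite -(fsetD1K cC') -eD; apply: sparse_paving_exchange; rewrite ?fsetD11 //.
- exact: fsubset_trans (fsubsetDl _ _) sC.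
- exact: fsubsetP sC c cC'.
- exact: fsubsetP sD d dD.
Qed.
End Matroid.

Local Open Scope ring_scope.

Section CauchyDavenport.
Variable G : zmodType.
Implicit Types (A B : {fset G}) (d e : G).

Definition orders_gt (L : nat) :=
  forall d (k : nat), d != 0 -> (0 < k)%N -> d *+ k = 0 -> (L < k)%N.

Definition sumset A B : {fset G} := [fset a + b | a in A, b in B].

Definition translate A d : {fset G} := [fset x + d | x in A].

Lemma sumsetP A B z :
  reflect (exists a b, [/\ a \in A, b \in B & z = a + b]) (z \in sumset A B).
Proof.
apply: (iffP (imfset2P _ _ _ _ _)) => [[a aA [b bB ->]]|[a [b [aA bB ->]]]].
  by exists a, b.
by exists a => //; exists b.
Qed.

Lemma mem_sumset A B a b : a \in A -> b \in B -> a + b \in sumset A B.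
Proof. by move=> aA bB; apply/sumsetP; exists a, b. Qed.

Lemma mem_translate A d x : x \in A -> x + d \in translate A d.
Proof. by move=> xA; apply/imfsetP; exists x. Qed.

Lemma card_translate A d : #|` translate A d| = #|` A|.
Proof. by rewrite card_in_imfset //= => x y _ _ /addIr. Qed.

Lemma card_sumset_ge A B b : b \in B -> (#|` A| <= #|` sumset A B|)%N.
Proof.
move=> bB; rewrite -(card_translate A b); apply: fsubset_leq_card.
by apply/fsubsetP=> _ /imfsetP[x /= xA ->]; apply: mem_sumset.
Qed.

Lemma translate_stable_mulrn A d :
  (forall x, x \in A -> x + d \in A) -> d *+ #|` A| = 0.
Proof.
move=> stA; have eA : translate A d = A.
  apply/eqP; rewrite eqEfcard card_translate leqnn andbT.
  by apply/fsubsetP=> _ /imfsetP[x /= xA ->]; apply: stA.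
have := congr1 (fun X : {fset G} => \sum_(x <- X) x) eA.
rewrite /= big_imfset /=; last by move=> x y _ _ /addIr.
rewrite big_split /= big_const_seq count_predT iter_addr_0 -[RHS]addr0.
by move/addrI.
Qed.

Definition dyson_left A B e := A `|` translate B e.
Definition dyson_right A B e := [fset b in B | b + e \in A].

Lemma sumset_dyson_sub A B e :
  sumset (dyson_left A B e) (dyson_right A B e) `<=` sumset A B.
Proof.
apply/fsubsetP=> _ /sumsetP[x [y [/fsetUP[xA|/imfsetP[b /= bB ->]] yB' ->]]];
  move: yB'; rewrite !inE => /andP[yB yeA]; first exact: mem_sumset.
by rewrite addrC addrCA addrC; apply: mem_sumset.
Qed.

Lemma card_dyson A B e :
  (#|` dyson_left A B e| + #|` dyson_right A B e| = #|` A| + #|` B|)%N.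
Proof.
have eI : A `&` translate B e = translate (dyson_right A B e) e.
  apply/fsetP=> x; apply/fsetIP/imfsetP => [[xA /imfsetP[b /= bB xE]]|[b /=]].
    by exists b; rewrite // !inE bB -xE xA.
  by rewrite !inE => /andP[bB beA] ->; split=> //; apply: mem_translate.
have := cardfsUI A (translate B e).
by rewrite eI !card_translate.
Qed.

Lemma cauchy_davenport L A B :
  orders_gt L -> A != fset0 -> B != fset0 -> (#|` sumset A B| <= L)%N ->
  (#|` A| + #|` B| <= #|` sumset A B| + 1)%N.
Proof.
move=> hL; have [k] := ubnP #|` B|; elim: k A B => // k IH A B ltB nA nB leL.
have /fset0Pn[b1 b1B] := nB.
have [B1|[b2 /fsetD1P[b21 b2B]]] := fset_0Vmem (B `\ b1).
  have := cardfsD1 b1 B; rewrite b1B B1 cardfs0.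
  by have := card_sumset_ge A b1B; lia.
have [[a0 [b0 [b' [a0A b0B b'B b'eA]]]]|stable] := classic (exists a0 b0 b',
    [/\ a0 \in A, b0 \in B, b' \in B & b' + (a0 - b0) \notin A]).
  (* Dyson's e-transform with e = a0 - b0 keeps b0 and drops b'. *)
  pose e := a0 - b0.
  have sB' : dyson_right A B e `<=` B `\ b'.
    apply/fsubsetP=> x; rewrite !inE => /andP[xB xeA]; rewrite xB andbT.
    by apply: contraNneq b'eA => <-.
  have b0B' : b0 \in dyson_right A B e by rewrite !inE b0B /e addrC subrK a0A.
  have nA' : dyson_left A B e != fset0 by apply/fset0Pn; exists a0; rewrite !inE a0A.
  have nB' : dyson_right A B e != fset0 by apply/fset0Pn; exists b0.
  have subS := fsubset_leq_card (sumset_dyson_sub A B e).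
  have := IH _ _ _ nA' nB' (leq_trans subS leL).
  have := fsubset_leq_card sB'; have := cardfsD1 b' B; rewrite b'B card_dyson.
  by lia.
(* Otherwise A is stable under translation by b1 - b2, whose order is thus at
   most |A| <= |A + B| <= L. *)
have dA : (b1 - b2) *+ #|` A| = 0.
  apply: translate_stable_mulrn => x xA; rewrite addrCA.
  case: (boolP (b1 + (x - b2) \in A)) => // xdA.
  by case: stable; exists x, b2, b1.
have d0 : b1 - b2 != 0 by rewrite subr_eq0 eq_sym.
have := hL _ _ d0 _ dA; rewrite cardfs_gt0 => /(_ nA).
by have := card_sumset_ge A b1B; lia.
Qed.
End CauchyDavenport.

Section Orders.
Variable G : zmodType.

Lemma orders_gt_le L L' : (L' <= L)%N -> orders_gt G L -> orders_gt G L'.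
Proof. by move=> leL hL d k d0 k0 dk; apply: leq_ltn_trans leL (hL d k d0 k0 dk). Qed.

Lemma torsion_free_orders_gt L : torsion_free G -> orders_gt G L.
Proof. by move=> tf d k d0 k0 dk; move: d0; rewrite (tf d k k0 dk) eqxx. Qed.

Section CyclicPrime.
Variables (p : nat) (g : G).
Hypothesis p_pr : prime p.
Hypothesis g_neq0 : g != 0.
Hypothesis gp : g *+ p = 0.
Hypothesis g_gen : forall x : G, exists k, x = g *+ k.

Lemma mulrn_eq0_dvdn i : g *+ i = 0 -> (p %| i)%N.
Proof.
move=> gi; apply: contraTT g_neq0; rewrite -prime_coprime // => /eqP cop.
have [a _] := Bezoutl i (prime_gt0 p_pr); rewrite cop => /dvdnP[q].
move/(congr1 (GRing.natmul g)); rewrite mulrnDr mulr1n mulnC mulrnA gi mul0rn.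
rewrite addr0 [(q * p)%N]mulnC mulrnA gp mul0rn.
by move=> ->; rewrite eqxx.
Qed.

Lemma orders_gt_pred_prime : orders_gt G p.-1.
Proof.
move=> d k d0 k0 dk; have [j dj] := g_gen d.
have : (p %| j * k)%N by apply: mulrn_eq0_dvdn; rewrite mulrnA -dj.
rewrite Euclid_dvdM // => /orP[/dvdnP[q jq]|/(dvdn_leq k0)]; last first.
  by have := prime_gt0 p_pr; lia.
by move: d0; rewrite dj jq [(q * p)%N]mulnC mulrnA gp mul0rn eqxx.
Qed.

Lemma card_le_pred_prime (E : {fset G}) : 0 \notin E -> (#|` E| <= p.-1)%N.
Proof.
move=> E0; have p0 := prime_gt0 p_pr.
have sE : E `<=` [fset g *+ i | i in iota 1 p.-1].
  apply/fsubsetP=> x xE; have [j xj] := g_gen x.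
  have xjp : x = g *+ (j %% p).
    by rewrite xj {1}(divn_eq j p) mulrnDr mulnC mulrnA gp mul0rn add0r.
  apply/imfsetP; exists (j %% p)%N => //=.
  rewrite mem_iota add1n prednK // ltn_pmod // andbT lt0n.
  by apply: contraNneq E0 => jp0; rewrite -(mulr0n g) -jp0 -xjp.
apply: (leq_trans (fsubset_leq_card sE)); apply: (leq_trans (leq_imfset_card _ _ _)).
rewrite -{2}[p.-1](size_iota 1); apply: uniq_leq_size; first exact: enum_finmem_uniq.
by move=> x; rewrite enum_finmemE.
Qed.
End CyclicPrime.

Lemma cyclic_prime_order_orders_gt (E : {fset G}) :
  cyclic_prime_order G -> 0 \notin E -> orders_gt G #|` E|.
Proof.
case=> p [g [p_pr [g0 [gp g_gen]]]] E0.
exact: (orders_gt_le (card_le_pred_prime p_pr gp g_gen E0)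
  (orders_gt_pred_prime p_pr g0 gp g_gen)).
Qed.
End Orders.

Section Partners.
Variables (G : zmodType) (M N : matroid G).

Definition partners (a : G) : {fset G} :=
  [fset b in ground N | a + b \notin ground M].

Lemma nbhd_partners_sub X : nbhd partners X `<=` ground N.
Proof. by apply/fsubsetP=> y /nbhdP[x _]; rewrite inE => /andP[]. Qed.

Lemma sdr_partners_image_sub A f : sdr partners A f -> f @` A `<=` ground N.
Proof. by move=> fS; apply: fsubset_trans (sdr_image_sub_nbhd fS) (nbhd_partners_sub A). Qed.

Lemma bases_matched_of_sdr A f : sdr partners A f -> bases_matched M A (f @` A).
Proof.
case=> fi fS; exists f; split; [by [] | split=> a aA].
  by apply/imfsetP; exists a.
by have := fS a aA; rewrite inE => /andP[].
Qed.

Lemma partners_surplus A :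
  orders_gt G #|` ground M| -> (#|` ground M| < #|` ground N| - 1)%N ->
  A `<=` ground M -> surplus partners A.
Proof.
move=> hL ltMN sAM X sXA nX.
have cXM := fsubset_leq_card (fsubset_trans sXA sAM).
pose R := ground N `\` nbhd partners X.
have cR : #|` R| = (#|` ground N| - #|` nbhd partners X|)%N.
  exact: cardfsDS (nbhd_partners_sub X).
have [R0|[t tR]] := fset_0Vmem R; first by move: cR; rewrite R0 cardfs0; lia.
have sXR : sumset X R `<=` ground M.
  apply/fsubsetP=> _ /sumsetP[x [y [xX /fsetDP[yN ynb] ->]]].
  by apply: contraNT ynb => xyM; apply/nbhdP; exists x; rewrite // !inE yN xyM.
have nR : R != fset0 by apply/fset0Pn; exists t.
have cXR := fsubset_leq_card sXR.
by have := cauchy_davenport hL nX nR cXR; lia.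
Qed.
End Partners.

Theorem corollary2p4 (G : zmodType) (M N : matroid G) (n : nat) :
  (torsion_free G \/ cyclic_prime_order G) ->
  loopless M -> loopless N ->
  has_rank M n -> has_rank N n -> (0 < n)%N ->
  sparse_paving N ->
  (#|` ground M| < #|` ground N| - 1)%N ->
  (0 : G) \notin ground N ->
  matched M N.
Proof.
move=> hG _ _ hrM hrN n0 spN ltMN zN A bA.
have cA := card_basis hrM bA.
have hL : orders_gt G #|` ground M|.
  case: hG => [/torsion_free_orders_gt //|/cyclic_prime_order_orders_gt/(_ zN)].
  by apply: orders_gt_le; lia.
have surp := partners_surplus hL ltMN (basis_sub bA).
have matched_of f : sdr (partners M N) A f -> indep N (f @` A) ->
    exists B, basis N B /\ bases_matched M A B.
  move=> fS iF; exists (f @` A); split; last exact: bases_matched_of_sdr fS.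
  by apply: (indep_card_basis hrN iF); rewrite (card_sdr_image fS).
have [f fS] := hall_marriage 0 (hall_condition_of_surplus surp).
have /fset0Pn[c cC] : f @` A != fset0 by rewrite -cardfs_gt0 (card_sdr_image fS) cA.
have [g gS] := hall_marriage 0 (surplus_hall_conditionD1 c surp).
have [h [hS cover]] := sdrD1_cover fS gS.
have hS' := sdr_sub (fun x _ => fsubsetDl (partners M N x) [fset c]) hS.
have [iF|iH] := sparse_paving_swap hrN n0 spN
  (sdr_partners_image_sub fS) (sdr_partners_image_sub hS')
  (etrans (card_sdr_image fS) cA) (etrans (card_sdr_image hS) cA) cC
  (sdrD1_image_notin hS) cover.
- exact: matched_of fS iF.
- exact: matched_of hS' iH.
Qed.
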